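(* Consider Algorithm 3 (described in the context) under the Standing Assumption and Matrix Assumption of the context, and suppose $\{\beta_k\}$ is chosen such that $\beta_k\bar\xi_k\bar\tau_k/(\bar\tau_kL+\Gamma)\in(0,1]$ for all $k\in\mathbb{N}$. Then for all $k\in\mathbb{N}$, $$\phi(x_k+\bar\alpha_k\bar d_k,\bar\tau_k)-\phi(x_k,\bar\tau_k)\le-\bar\alpha_k\Delta q(x_k,\bar\tau_k,g_k,H_k,d_k)+\tfrac12\bar\alpha_k\beta_k\Delta q(x_k,\bar\tau_k,\bar g_k,H_k,\bar d_k)+\bar\alpha_k\bar\tau_kg_k^T(\bar d_k-d_k).$$
   Context: Problem: $\min_x f(x)$ s.t. $c(x)=0$, $f(x)=\mathbb{E}[F(x,\omega)]$, $c:\mathbb{R}^n\to\mathbb{R}^m$ deterministic. Notation: $g_k=\nabla f(x_k)$, $c_k=c(x_k)$, $J_k=\nabla c(x_k)^T$; $\phi(x,\tau)=\tau f(x)+\|c(x)\|_1$; $\Delta q(x,\tau,g,H,d)=-\tau(g^Td+\frac12\max\{d^THd,0\})+\|c(x)\|_1$. Standing Assumption: an open convex set $\mathcal X$ contains all iterates; $f$ is $C^1$, bounded below on $\mathcal X$, $\nabla f$ bounded and $L$-Lipschitz on $\mathcal X$; $c$, $\nabla c^T$ bounded on $\mathcal X$; $\nabla c_i$ is $\gamma_i$-Lipschitz on $\mathcal X$; singular values of $\nabla c(x)^T$ bounded away from zero uniformly over $\mathcal X$; $\Gamma:=\sum_i\gamma_i$. Matrix Assumption: deterministic symmetric $H_k$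 with $\|H_k\|_2\le\kappa_H$ and $u^TH_ku\ge\zeta\|u\|_2^2$ whenever $J_ku=0$. Algorithm 3 (inputs $x_0$, $\bar\tau_{-1}>0$, $\epsilon,\sigma\in(0,1)$, $\bar\xi_{-1}>0$, $\{\beta_k\}\subset(0,1]$, $\theta\ge0$): at iteration $k$, obtain stochastic gradient $\bar g_k$; $(\bar d_k,\bar y_k)$ solves $H_k\bar d_k+J_k^T\bar y_k=-\bar g_k$, $J_k\bar d_k=-c_k$ (assumed $\bar d_k\neq0$). $\bar\tau_k^{trial}=\infty$ if $\bar g_k^T\bar d_k+\max\{\bar d_k^TH_k\bar d_k,0\}\le0$, else $\frac{(1-\sigma)\|c_k\|_1}{\bar g_k^T\bar d_k+\max\{\bar d_k^TH_k\bar d_k,0\}}$; $\bar\tau_k=\bar\tau_{k-1}$ if $\bar\tau_{k-1}\le\bar\tau_k^{trial}$, else $(1-\epsilon)\bar\tau_k^{trial}$. $\bar\xi_k^{trial}=\frac{\Delta q(x_k,\bar\tau_k,\bar g_k,H_k,\bar d_k)}{\bar\tau_k\|\bar d_k\|_2^2}$; $\bar\xi_k=\bar\xi_{k-1}$ if $\bar\xi_{k-1}\le\bar\xi_k^{trial}$, else $(1-\epsilon)\bar\xi_k^{trial}$. With $D_k=(\bar\tau_kL+\Gamma)\|\bar d_k\|_2^2$, $\hat a_k=\beta_k\Delta q(x_k,\bar\tau_k,\bar g_k,H_k,\bar d_k)/D_k$, $\tilde a_k=\hat a_k-4\|c_k\|_1/D_k$, project both onto $[a_k,a_k+\theta\beta_k^2]$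 with $a_k=\frac{\beta_k\bar\xi_k\bar\tau_k}{\bar\tau_kL+\Gamma}$ to get $\widehat\alpha_k,\widetilde\alpha_k$; $\bar\alpha_k=\widehat\alpha_k$ if $\widehat\alpha_k<1$, $1$ if $\widetilde\alpha_k\le1\le\widehat\alpha_k$, $\widetilde\alpha_k$ if $\widetilde\alpha_k>1$; $x_{k+1}=x_k+\bar\alpha_k\bar d_k$. Deterministic counterpart: $(d_k,y_k)$ solves $H_kd_k+J_k^Ty_k=-g_k$, $J_kd_k=-c_k$. *)

From HB Require Import structures.
From mathcomp Require Import all_boot all_order all_algebra.
From mathcomp Require Import all_classical all_reals all_analysis.
Set Implicit Arguments. Unset Strict Implicit. Unset Printing Implicit Defensive.
Import Order.TTheory GRing.Theory Num.Theory.
Import numFieldNormedType.Exports.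
Local Open Scope ring_scope.
Local Open Scope classical_set_scope.

Section Defs.
Variable R : realType.

Definition dotv n (u v : 'cV[R]_n) : R := \sum_i u i 0 * v i 0.
Definition norm2 n (u : 'cV[R]_n) : R := Num.sqrt (dotv u u).
Definition norm1 n (u : 'cV[R]_n) : R := \sum_i `|u i 0|.

Definition quad n (H : 'M[R]_n) (d : 'cV[R]_n) : R := dotv d (H *m d).

Definition convex_vset n (X : set 'cV[R]_n) : Prop :=
  forall u v t, X u -> X v -> 0 <= t <= 1 -> X ((1 - t) *: u + t *: v).

Definition merit n m (f : 'cV[R]_n -> R) (c : 'cV[R]_n -> 'cV[R]_m)
  (x : 'cV[R]_n) (tau : R) : R := tau * f x + norm1 (c x).

Definition dq n m (c : 'cV[R]_n -> 'cV[R]_m) (x : 'cV[R]_n) (tau : R)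
  (g : 'cV[R]_n) (H : 'M[R]_n) (d : 'cV[R]_n) : R :=
  - tau * (dotv g d + 2^-1 * Num.max (quad H d) 0) + norm1 (c x).

(* merit parameter update; the case "denominator <= 0" is tau^trial = +oo,
   in which case tau_{k-1} <= tau^trial and tau_k = tau_{k-1}. *)
Definition tau_update n m (eps sigma prev : R) (cx : 'cV[R]_m)
  (g : 'cV[R]_n) (H : 'M[R]_n) (d : 'cV[R]_n) : R :=
  let den := dotv g d + Num.max (quad H d) 0 in
  if den <= 0 then prev
  else let tr := (1 - sigma) * norm1 cx / den in
       if prev <= tr then prev else (1 - eps) * tr.

Definition xi_update (eps prev trial : R) : R :=
  if prev <= trial then prev else (1 - eps) * trial.

Definition proj_int (lo hi v : R) : R := Num.min (Num.max v lo) hi.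

Definition step_size n m (c : 'cV[R]_n -> 'cV[R]_m) (L Gam theta beta tau xi : R)
  (x : 'cV[R]_n) (g : 'cV[R]_n) (H : 'M[R]_n) (d : 'cV[R]_n) : R :=
  let D := (tau * L + Gam) * norm2 d ^+ 2 in
  let ah := beta * dq c x tau g H d / D in
  let atl := ah - 4 * norm1 (c x) / D in
  let a := beta * xi * tau / (tau * L + Gam) in
  let alh := proj_int a (a + theta * beta ^+ 2) ah in
  let alt := proj_int a (a + theta * beta ^+ 2) atl in
  if alh < 1 then alh
  else if alt <= 1 then 1
  else alt.

End Defs.

From HB Require Import structures.
From mathcomp Require Import all_boot all_order all_algebra.
From mathcomp Require Import all_classical all_reals all_analysis.
From mathcomp Require Import ring lra.
Import Order.TTheory GRing.Theory Num.Theory.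
Import numFieldNormedType.Exports.
Set Implicit Arguments. Unset Strict Implicit. Unset Printing Implicit Defensive.
Local Open Scope ring_scope.
Local Open Scope classical_set_scope.

(* The argument is the descent lemma applied along the step, once for f and
   once for each constraint c_i, whose gradient is gamma_i-Lipschitz.  Since
   J_k d_k = -c_k, the constraints give
     ||c(x_k + a d_k)||_1 <= |1 - a| ||c_k||_1 + (Gamma/2) a^2 ||d_k||^2,
   so the merit change is at most
     a tau g_k^T d_k + (|1 - a| - 1) ||c_k||_1 + (a/2) a (tau L + Gamma) ||d_k||^2.
   The step-size rule guarantees a (tau L + Gamma) ||d_k||^2 <= beta Dq_k when
   a <= 1, and <= beta Dq_k - 4 ||c_k||_1 when a > 1, which pays for
   |1 - a| - 1 = a - 2.  The merit and ratio parameter updates enter only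
   through these guarantees: they keep tau_k, xi_k and Dq_k nonnegative with
   xi_k tau_k ||d_k||^2 <= Dq_k. *)

Section EuclideanVectors.
Variables (R : realType) (n : nat).
Implicit Types u v w : 'cV[R]_n.

Lemma dotvC u v : dotv u v = dotv v u.
Proof. by apply: eq_bigr => i _; rewrite mulrC. Qed.

Lemma dotvBl u v w : dotv (u - v) w = dotv u w - dotv v w.
Proof. by rewrite /dotv -sumrB; apply: eq_bigr => i _; rewrite !mxE mulrBl. Qed.

Lemma dotvBr u v w : dotv u (v - w) = dotv u v - dotv u w.
Proof. by rewrite dotvC dotvBl !(dotvC u). Qed.

Lemma dotvZl t u v : dotv (t *: u) v = t * dotv u v.
Proof. by rewrite /dotv mulr_sumr; apply: eq_bigr => i _; rewrite !mxE mulrA. Qed.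

Lemma dotvZr t u v : dotv u (t *: v) = t * dotv u v.
Proof. by rewrite dotvC dotvZl dotvC. Qed.

Lemma dotv_ge0 u : 0 <= dotv u u.
Proof. by apply: sumr_ge0 => i _; rewrite -expr2 sqr_ge0. Qed.

Lemma dotv_eq0 u : (dotv u u == 0) = (u == 0).
Proof.
apply/idP/eqP => [/eqP u0|->]; last by rewrite /dotv big1 // => i _; rewrite mxE mulr0.
apply/matrixP => i j; rewrite (ord1 j) mxE.
have /(_ i isT)/eqP := psumr_eq0P (fun j _ => sqr_ge0 (u j 0)) u0.
by rewrite mulf_eq0 orbb => /eqP.
Qed.

Lemma dotv_gt0 u : u != 0 -> 0 < dotv u u.
Proof. by rewrite lt_def dotv_ge0 dotv_eq0 andbT. Qed.

Lemma norm1_ge0 u : 0 <= norm1 u.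
Proof. exact: sumr_ge0. Qed.

Lemma norm2_ge0 u : 0 <= norm2 u.
Proof. exact: sqrtr_ge0. Qed.

Lemma norm2_sqr u : norm2 u ^+ 2 = dotv u u.
Proof. by rewrite sqr_sqrtr // dotv_ge0. Qed.

Lemma norm2Z t u : norm2 (t *: u) = `|t| * norm2 u.
Proof. by rewrite /norm2 dotvZl dotvZr mulrA -expr2 sqrtrM ?sqr_ge0 // sqrtr_sqr. Qed.

Lemma dotv_Lagrange u v :
  \sum_i \sum_j (u i 0 * v j 0 - u j 0 * v i 0) ^+ 2 =
  2 * (dotv u u * dotv v v - dotv u v ^+ 2).
Proof.
transitivity (\sum_i \sum_j (u i 0 * u i 0 * (v j 0 * v j 0)
    + u j 0 * u j 0 * (v i 0 * v i 0)
    - (u i 0 * v i 0 * (u j 0 * v j 0) + u i 0 * v i 0 * (u j 0 * v j 0)))).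
  by apply: eq_bigr => i _; apply: eq_bigr => j _; ring.
under eq_bigr do rewrite sumrB !big_split /=.
rewrite sumrB !big_split /= [X in _ + X - _]exchange_big /=.
by rewrite /dotv expr2 !big_distrlr /=; ring.
Qed.

Lemma CauchySchwarz_dotv u v : `|dotv u v| <= norm2 u * norm2 v.
Proof.
rewrite /norm2 -sqrtrM ?dotv_ge0 // -sqrtr_sqr ler_wsqrtr //.
have : 0 <= \sum_i \sum_j (u i 0 * v j 0 - u j 0 * v i 0) ^+ 2.
  by do 2!(apply: sumr_ge0 => ? _); exact: sqr_ge0.
rewrite dotv_Lagrange; lra.
Qed.

Lemma dotv_row m (A : 'M[R]_(m, n)) i v : dotv (row i A)^T v = (A *m v) i 0.
Proof. by rewrite /dotv !mxE; apply: eq_bigr => j _; rewrite !mxE. Qed.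

End EuclideanVectors.

Section RealIncrements.
Variable R : realType.

Lemma is_derive_increment_le (u v u' v' : R -> R) (a : R) : 0 <= a ->
  (forall t, 0 <= t <= a -> is_derive t 1 u (u' t)) ->
  (forall t, 0 <= t <= a -> is_derive t 1 v (v' t)) ->
  (forall t, 0 < t < a -> u' t <= v' t) ->
  u a - u 0 <= v a - v 0.
Proof.
move=> a0 du dv le_uv.
have dw t : 0 <= t <= a -> is_derive t 1 (u - v) (u' t - v' t).
  by move=> ht; have := du t ht; have := dv t ht => *; exact: is_deriveB.
have oc t : t \in `]0, a[%R -> 0 <= t <= a.
  by rewrite in_itv /= => /andP[t0 ta]; rewrite !ltW.
have der t : t \in `[0, a]%R -> derivable (u - v) t 1.
  by rewrite in_itv /= => ht; have := dw t ht => ?; exact: ex_derive.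
have : u a - v a <= u 0 - v 0.
  apply: (@ler0_derive1_le_cc R (u - v) 0 a) => //.
  - by move=> t /oc ht; apply: der; rewrite in_itv.
  - move=> t /[dup] /oc ht; rewrite in_itv /= => /andP[t0 ta].
    have := dw t ht => dwt; rewrite derive1E derive_val subr_le0.
    by apply: le_uv; rewrite t0 ta.
  - by apply: derivable_within_continuous => t; exact: der.
  - by rewrite in_itv /= lexx a0.
  - by rewrite in_itv /= lexx a0.
lra.
Qed.

Lemma increment_linear_bound (g g' : R -> R) (A K a : R) : 0 <= a ->
  (forall t, 0 <= t <= a -> is_derive t 1 g (g' t)) ->
  (forall t, 0 <= t <= a -> `|g' t - A| <= K * t) ->
  `|g a - g 0 - a * A| <= K / 2 * a ^+ 2.
Proof.
move=> a0 dg bound.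
pose p (s : R) : R -> R := A \*: idfun + s \*: idfun ^+ 2.
have dp (s t : R) : is_derive t 1 (p s) (A + s * (2 * t)).
  by apply: is_derive_eq; rewrite /= expr1 /GRing.scale /=; ring.
have ic t : 0 < t < a -> 0 <= t <= a by case/andP => t0 ta; rewrite !ltW.
have up : g a - g 0 <= p (K / 2) a - p (K / 2) 0.
  apply: is_derive_increment_le a0 dg (fun t _ => dp _ t) _ => t /ic ht.
  by have := bound t ht; rewrite ler_norml; lra.
have lo : p (- (K / 2)) a - p (- (K / 2)) 0 <= g a - g 0.
  apply: is_derive_increment_le a0 (fun t _ => dp _ t) dg _ => t /ic ht.
  by have := bound t ht; rewrite ler_norml; lra.
have pE (s t : R) : p s t = A * t + s * t ^+ 2 by [].
rewrite !pE expr0n /= !mulr0 !addr0 !subr0 in up lo.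
rewrite ler_norml; apply/andP; split; lra.
Qed.

End RealIncrements.

Section DescentLemma.
Variables (R : realType) (n : nat).
Implicit Types x d : 'cV[R]_n.

Lemma differentiable_line_is_derive (phi : 'cV[R]_n -> R) x d t :
  differentiable phi (x + t *: d) ->
  is_derive t 1 (fun s => phi (x + s *: d)) ('d phi (x + t *: d) d).
Proof.
move=> dphi; rewrite -deriveE //.
(* Both directional derivatives are limits of the same difference quotient. *)
have E : (fun h : R => h^-1 *: (phi (x + (h *: 1 + t) *: d) - phi (x + t *: d))) =
         (fun h : R => h^-1 *: (phi (h *: d + (x + t *: d)) - phi (x + t *: d))).
  by apply: funext => h; rewrite [h *: 1]mulr1 scalerDl addrCA addrA.
have dl : derivable (fun s : R => phi (x + s *: d)) t 1.
  by rewrite /derivable /= E; exact: diff_derivable.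
suff -> : 'D_d phi (x + t *: d) = 'D_1 (fun s : R => phi (x + s *: d)) t.
  exact: derivableP.
by rewrite /derive /= E.
Qed.

Lemma descent_lemma (X : set 'cV[R]_n) (phi : 'cV[R]_n -> R)
    (G : 'cV[R]_n -> 'cV[R]_n) (K : R) x d :
  convex_vset X -> X x -> X (x + d) ->
  (forall z, X z -> differentiable phi z /\ forall v, 'd phi z v = dotv (G z) v) ->
  (forall z w, X z -> X w -> norm2 (G z - G w) <= K * norm2 (z - w)) ->
  `|phi (x + d) - phi x - dotv (G x) d| <= K / 2 * norm2 d ^+ 2.
Proof.
move=> cX Xx Xy dphi LG.
have seg t : 0 <= t <= 1 -> X (x + t *: d).
  move=> t01; have := cX _ _ t Xx Xy t01.
  by rewrite scalerDr addrA -scalerDl subrK scale1r.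
have deriv (t : R) : 0 <= t <= 1 ->
    is_derive t 1 (fun s : R => phi (x + s *: d)) (dotv (G (x + t *: d)) d).
  by move=> /seg /dphi[dz <-]; exact: differentiable_line_is_derive.
have slope (t : R) : 0 <= t <= 1 ->
    `|dotv (G (x + t *: d)) d - dotv (G x) d| <= K * norm2 d ^+ 2 * t.
  move=> /[dup] /andP[t0 _] /seg Xt; rewrite -dotvBl.
  apply: le_trans (CauchySchwarz_dotv _ _) _.
  have := LG _ _ Xt Xx; rewrite addrAC subrr add0r norm2Z ger0_norm // => LGt.
  rewrite (_ : _ * t = K * (t * norm2 d) * norm2 d); last by ring.
  exact: ler_wpM2r (norm2_ge0 _) _ _ LGt.
have := increment_linear_bound ler01 deriv slope.
by rewrite scale1r scale0r addr0 mul1r expr1n mulr1 mulrAC.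
Qed.

End DescentLemma.

Section AlgorithmParameters.
Variable R : realType.

Lemma tau_update_ge0 n m (eps sigma prev : R) (cx : 'cV[R]_m) (g : 'cV[R]_n) H d :
  0 <= prev -> eps <= 1 -> sigma <= 1 -> 0 <= tau_update eps sigma prev cx g H d.
Proof.
move=> p0 e1 s1; rewrite /tau_update /=; set den := _ + _.
case: (lerP den 0) => // den0; case: ifP => // _.
by rewrite mulr_ge0 ?divr_ge0 ?mulr_ge0 ?subr_ge0 ?norm1_ge0 ?(ltW den0).
Qed.

Lemma tau_update_model_le n m (eps sigma prev : R) (cx : 'cV[R]_m) (g : 'cV[R]_n) H d :
  0 <= prev -> 0 <= eps -> sigma <= 1 ->
  tau_update eps sigma prev cx g H d * (dotv g d + Num.max (quad H d) 0)
    <= (1 - sigma) * norm1 cx.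
Proof.
move=> p0 e0 s1; have c0 : 0 <= (1 - sigma) * norm1 cx.
  by rewrite mulr_ge0 ?subr_ge0 ?norm1_ge0.
rewrite /tau_update /=; set den := _ + _; case: (lerP den 0) => [den0|den0].
  exact: le_trans (mulr_ge0_le0 p0 den0) c0.
set tr := (1 - sigma) * norm1 cx / den.
have trE : tr * den = (1 - sigma) * norm1 cx by rewrite divfK // gt_eqF.
case: ifP => [le_p|_].
  by rewrite -trE ler_pM2r.
by rewrite -mulrA trE ler_piMl // lerBlDr lerDl.
Qed.

Lemma dq_ge0 n m (c : 'cV[R]_n -> 'cV[R]_m) x (tau sigma : R) g H d :
  0 <= tau -> 0 <= sigma ->
  tau * (dotv g d + Num.max (quad H d) 0) <= (1 - sigma) * norm1 (c x) ->
  0 <= dq c x tau g H d.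
Proof.
move=> t0 s0; rewrite /dq; set M := Num.max _ _ => le_model.
have : 0 <= tau * M by rewrite mulr_ge0 // le_max lexx orbT.
have : 0 <= sigma * norm1 (c x) by rewrite mulr_ge0 ?norm1_ge0.
lra.
Qed.

Lemma xi_update_ge0 (eps prev trial : R) :
  0 <= prev -> eps <= 1 -> 0 <= trial -> 0 <= xi_update eps prev trial.
Proof.
by move=> p0 e1 t0; rewrite /xi_update; case: ifP => // _; rewrite mulr_ge0 ?subr_ge0.
Qed.

Lemma xi_update_le (eps prev trial : R) :
  0 <= eps -> 0 <= trial -> xi_update eps prev trial <= trial.
Proof.
move=> e0 t0; rewrite /xi_update; case: ifP => // _.
by rewrite ler_piMl // lerBlDr lerDl.
Qed.

Lemma proj_int_ge (lo hi v : R) : lo <= hi -> lo <= proj_int lo hi v.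
Proof. by move=> lohi; rewrite /proj_int le_min lohi le_max lexx orbT. Qed.

Lemma proj_int_le_max (lo hi v : R) : proj_int lo hi v <= Num.max v lo.
Proof. by rewrite /proj_int ge_min lexx. Qed.

Lemma ratio_gt0_factors (b xi tau s : R) : 0 <= b -> 0 <= xi -> 0 <= tau ->
  0 < b * xi * tau / s -> 0 < s /\ 0 < tau.
Proof.
move=> b0 xi0 tau0 r_gt0; split.
  rewrite ltNge; apply: contraTN r_gt0 => s_le0.
  by rewrite -leNgt mulr_ge0_le0 ?invr_le0 ?mulr_ge0.
by rewrite lt_def tau0 andbT; apply: contraTneq r_gt0 => ->; rewrite mulr0 mul0r ltxx.
Qed.

Lemma step_size_cases n m (c : 'cV[R]_n -> 'cV[R]_m) (L Gam theta beta tau xi : R)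
    x g H d :
  let D := (tau * L + Gam) * norm2 d ^+ 2 in
  let P := beta * dq c x tau g H d in
  let al := step_size c L Gam theta beta tau xi x g H d in
  0 < beta -> 0 <= xi -> 0 <= tau -> d != 0 -> 0 <= theta ->
  0 < beta * xi * tau / (tau * L + Gam) <= 1 ->
  xi <= dq c x tau g H d / (tau * norm2 d ^+ 2) ->
  0 < al /\ (al <= 1 /\ al * D <= P \/ 1 < al /\ al * D <= P - 4 * norm1 (c x)).
Proof.
move=> D P al b_gt0 xi0 tau0 d0 th0 /andP[a0 a1] xi_le.
have [s_gt0 tau_gt0] := ratio_gt0_factors (ltW b_gt0) xi0 tau0 a0.
have N_gt0 : 0 < norm2 d ^+ 2 by rewrite norm2_sqr dotv_gt0.
have D0 : 0 < D := mulr_gt0 s_gt0 N_gt0.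
rewrite /al /step_size /= -/D -/P.
set a := beta * xi * tau / _ in a0 a1 *; set hi := a + _.
have aD : a * D <= P.
  rewrite ler_pdivlMr ?(mulr_gt0 tau_gt0 N_gt0) // in xi_le.
  rewrite (_ : a * D = beta * (xi * (tau * norm2 d ^+ 2))); last first.
    by rewrite /a /D; field; rewrite gt_eqF.
  exact: ler_wpM2l (ltW b_gt0) _ _ xi_le.
have ahi : a <= hi by rewrite lerDl mulr_ge0 ?sqr_ge0.
have PD : P / D * D = P by rewrite divfK // gt_eqF.
have aPD : a <= P / D by rewrite ler_pdivlMr.
have le_PD : proj_int a hi (P / D) <= P / D.
  by rewrite (le_trans (proj_int_le_max _ _ _)) // ge_max lexx aPD.
case: ifP => [lt1|/negbT ge1]; last rewrite -leNgt in ge1.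
  split; first exact: lt_le_trans a0 (proj_int_ge _ ahi).
  by left; split; [exact: ltW | rewrite -{2}PD ler_pM2r].
case: ifP => [_|/negbT gt1]; last rewrite -ltNge in gt1.
  by split=> //; left; rewrite -PD ler_pM2r // (le_trans ge1 le_PD).
split; first exact: lt_trans ltr01 gt1.
right; split=> //.
rewrite -[P - _](_ : (P / D - 4 * norm1 (c x) / D) * D = _); last first.
  by rewrite mulrBl PD divfK // gt_eqF.
rewrite ler_pM2r //; move: (proj_int_le_max a hi (P / D - 4 * norm1 (c x) / D)).
rewrite le_max => /orP[] // le_a.
by move: gt1; rewrite ltNge (le_trans le_a a1).
Qed.

End AlgorithmParameters.

Section MeritStep.
Variables (R : realType) (n m : nat) (X : set 'cV[R]_n).
Variables (f : 'cV[R]_n -> R) (gradf : 'cV[R]_n -> 'cV[R]_n).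
Variables (c : 'cV[R]_n -> 'cV[R]_m) (Jc : 'cV[R]_n -> 'M[R]_(m, n)).
Variables (L : R) (gam : 'I_m -> R).
Hypothesis convX : convex_vset X.
Hypothesis f_diff : forall z, X z ->
  differentiable f z /\ forall v, 'd f z v = dotv (gradf z) v.
Hypothesis gradf_Lip : forall z w, X z -> X w ->
  norm2 (gradf z - gradf w) <= L * norm2 (z - w).
Hypothesis c_diff : forall (i : 'I_m) z, X z ->
  differentiable (fun w => c w i 0) z /\
  forall v, 'd (fun w => c w i 0) z v = (Jc z *m v) i 0.
Hypothesis Jc_Lip : forall (i : 'I_m) z w, X z -> X w ->
  norm2 ((row i (Jc z) - row i (Jc w))^T) <= gam i * norm2 (z - w).

Lemma f_step_le x d al : X x -> X (x + al *: d) ->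
  f (x + al *: d) - f x <= al * dotv (gradf x) d + L / 2 * al ^+ 2 * norm2 d ^+ 2.
Proof.
move=> Xx Xy; have := descent_lemma convX Xx Xy f_diff gradf_Lip.
rewrite dotvZr !norm2_sqr dotvZl dotvZr ler_norml.
by case/andP=> _; lra.
Qed.

Lemma norm1_c_step_le x d al : X x -> X (x + al *: d) -> Jc x *m d = - c x ->
  norm1 (c (x + al *: d)) <=
    `|1 - al| * norm1 (c x) + (\sum_i gam i) / 2 * al ^+ 2 * norm2 d ^+ 2.
Proof.
move=> Xx Xy Jd; rewrite /norm1 mulr_sumr !mulr_suml -big_split /=.
apply: ler_sum => i _.
have ci_diff z : X z -> differentiable (fun w => c w i 0) z /\
    forall v, 'd (fun w => c w i 0) z v = dotv (row i (Jc z))^T v.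
  by move=> /(c_diff i)[dz dze]; split=> // v; rewrite dze dotv_row.
have ci_Lip z w : X z -> X w ->
    norm2 ((row i (Jc z))^T - (row i (Jc w))^T) <= gam i * norm2 (z - w).
  by move=> Xz Xw; rewrite -linearB; exact: Jc_Lip.
have := descent_lemma convX Xx Xy ci_diff ci_Lip.
rewrite dotvZr dotv_row Jd mxE !norm2_sqr dotvZl dotvZr.
set ci := c x i 0; set w := c _ i 0 => bound.
rewrite (_ : w = (1 - al) * ci + (w - ci - al * - ci)); last by ring.
rewrite (le_trans (ler_normD _ _)) // normrM lerD //.
by apply: le_trans bound _; rewrite !mulrA.
Qed.

Lemma merit_step_le x db d al tau beta H gb :
  let D := (tau * L + \sum_i gam i) * norm2 db ^+ 2 in
  let P := beta * dq c x tau gb H db in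
  X x -> X (x + al *: db) -> Jc x *m db = - c x -> 0 <= tau -> 0 < al ->
  al <= 1 /\ al * D <= P \/ 1 < al /\ al * D <= P - 4 * norm1 (c x) ->
  merit f c (x + al *: db) tau - merit f c x tau
    <= - al * dq c x tau (gradf x) H d + 2^-1 * al * beta * dq c x tau gb H db
       + al * tau * dotv (gradf x) (db - d).
Proof.
move=> D P Xx Xy Jd tau0 al0 cases.
have f_step := ler_wpM2l tau0 (f_step_le Xx Xy).
have c_step := norm1_c_step_le Xx Xy Jd.
have DE : al / 2 * (al * D) = tau * (L / 2 * al ^+ 2 * norm2 db ^+ 2)
    + (\sum_i gam i) / 2 * al ^+ 2 * norm2 db ^+ 2 by rewrite /D; ring.
have max0 : 0 <= al * tau * Num.max (quad H d) 0.
  by rewrite !mulr_ge0 ?(ltW al0) // le_max lexx orbT.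
have c0 := norm1_ge0 (c x).
rewrite /merit [dq c x tau (gradf x) H d]/dq dotvBr.
case: cases => [[al1 alD]|[al1 alD]].
  rewrite ger0_norm ?subr_ge0 // in c_step.
  have := ler_wpM2l (divr_ge0 (ltW al0) (ler0n _ 2)) alD; rewrite DE /P; lra.
rewrite ltr0_norm ?subr_lt0 // in c_step.
have := ler_wpM2l (divr_ge0 (ltW al0) (ler0n _ 2)) alD; rewrite DE /P.
have : 0 <= al * norm1 (c x) by rewrite mulr_ge0 ?(ltW al0).
lra.
Qed.

End MeritStep.

Theorem lemma3p6 (R : realType) (n m : nat)
  (X : set 'cV[R]_n)
  (f : 'cV[R]_n -> R) (gradf : 'cV[R]_n -> 'cV[R]_n)
  (c : 'cV[R]_n -> 'cV[R]_m) (Jc : 'cV[R]_n -> 'M[R]_(m, n))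
  (L : R) (gam : 'I_m -> R)
  (H : nat -> 'M[R]_n) (kH zeta : R)
  (tau_m1 eps sigma xi_m1 theta : R) (beta : nat -> R)
  (x gb db d : nat -> 'cV[R]_n) (yb y : nat -> 'cV[R]_m)
  (taub xib alphab : nat -> R)
  (* Standing Assumption *)
  (HXopen : open X) (HXconv : convex_vset X) (HXit : forall k, X (x k))
  (Hfdiff : forall z, X z ->
     differentiable f z /\ forall v, 'd f z v = dotv (gradf z) v)
  (Hflb : exists lb, forall z, X z -> lb <= f z)
  (Hgbd : exists B, forall z, X z -> norm2 (gradf z) <= B)
  (HgL : forall z w, X z -> X w -> norm2 (gradf z - gradf w) <= L * norm2 (z - w))
  (Hcdiff : forall (i : 'I_m) z, X z ->
     differentiable (fun w => c w i 0) z /\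
     forall v, 'd (fun w => c w i 0) z v = (Jc z *m v) i 0)
  (Hcbd : exists B, forall z, X z -> norm2 (c z) <= B)
  (HJbd : exists B, forall z, X z -> forall v, norm2 (Jc z *m v) <= B * norm2 v)
  (HcL : forall (i : 'I_m) z w, X z -> X w ->
     norm2 ((row i (Jc z) - row i (Jc w))^T) <= gam i * norm2 (z - w))
  (Hsv : exists kap, 0 < kap /\
     forall z, X z -> forall u : 'cV[R]_m, kap * norm2 u <= norm2 ((Jc z)^T *m u))
  (* Matrix Assumption *)
  (HHsym : forall k, (H k)^T = H k)
  (HHbd : forall k u, norm2 (H k *m u) <= kH * norm2 u)
  (Hzeta : 0 < zeta)
  (HHcurv : forall k u, Jc (x k) *m u = 0 -> zeta * norm2 u ^+ 2 <= quad (H k) u)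
  (* inputs of Algorithm 3 *)
  (Htau0 : 0 < tau_m1) (Heps : 0 < eps < 1) (Hsigma : 0 < sigma < 1)
  (Hxi0 : 0 < xi_m1) (Hbeta : forall k, 0 < beta k <= 1) (Htheta : 0 <= theta)
  (* iterations of Algorithm 3 (gb k is the stochastic gradient realization) *)
  (Hsys : forall k, H k *m db k + (Jc (x k))^T *m yb k = - gb k /\
                    Jc (x k) *m db k = - c (x k))
  (Hdb0 : forall k, db k != 0)
  (Htau : forall k, taub k =
     tau_update eps sigma (if k is k'.+1 then taub k' else tau_m1)
       (c (x k)) (gb k) (H k) (db k))
  (Hxi : forall k, xib k =
     xi_update eps (if k is k'.+1 then xib k' else xi_m1)
       (dq c (x k) (taub k) (gb k) (H k) (db k) / (taub k * norm2 (db k) ^+ 2)))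
  (Halpha : forall k, alphab k =
     step_size c L (\sum_i gam i) theta (beta k) (taub k) (xib k)
       (x k) (gb k) (H k) (db k))
  (Hx : forall k, x k.+1 = x k + alphab k *: db k)
  (* deterministic counterpart *)
  (Hdet : forall k, H k *m d k + (Jc (x k))^T *m y k = - gradf (x k) /\
                    Jc (x k) *m d k = - c (x k))
  (* choice of beta *)
  (Hbetac : forall k,
     0 < beta k * xib k * taub k / (taub k * L + \sum_i gam i) <= 1) :
  forall k,
    merit f c (x k + alphab k *: db k) (taub k) - merit f c (x k) (taub k)
    <= - alphab k * dq c (x k) (taub k) (gradf (x k)) (H k) (d k)
       + 2^-1 * alphab k * beta k * dq c (x k) (taub k) (gb k) (H k) (db k)
       + alphab k * taub k * dotv (gradf (x k)) (db k - d k).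
Proof.
have [eps0 eps1] := andP Heps; have [sigma0 sigma1] := andP Hsigma.
have tau_ge0 : forall j, 0 <= taub j.
  by elim=> [|j IH]; rewrite Htau; apply: tau_update_ge0 => //; exact: ltW.
have model_le : forall j, taub j * (dotv (gb j) (db j) + Num.max (quad (H j) (db j)) 0)
    <= (1 - sigma) * norm1 (c (x j)).
  by case=> [|j]; rewrite Htau; apply: tau_update_model_le; rewrite ?tau_ge0 ?ltW.
have trial_ge0 : forall j,
    0 <= dq c (x j) (taub j) (gb j) (H j) (db j) / (taub j * norm2 (db j) ^+ 2).
  move=> j; apply: divr_ge0; first exact: dq_ge0 (tau_ge0 j) (ltW sigma0) (model_le j).
  exact: mulr_ge0 (tau_ge0 j) (sqr_ge0 _).
have xi_ge0 : forall j, 0 <= xib j.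
  by elim=> [|j IH]; rewrite Hxi; apply: xi_update_ge0 => //; exact: ltW.
have xi_le : forall j,
    xib j <= dq c (x j) (taub j) (gb j) (H j) (db j) / (taub j * norm2 (db j) ^+ 2).
  by move=> j; rewrite Hxi; apply: xi_update_le => //; exact: ltW.
move=> k; have [beta_gt0 _] := andP (Hbeta k).
have [al_gt0 al_cases] := step_size_cases beta_gt0 (xi_ge0 k) (tau_ge0 k) (Hdb0 k)
  Htheta (Hbetac k) (xi_le k).
rewrite -Halpha in al_gt0 al_cases.
have Xy : X (x k + alphab k *: db k) by rewrite -Hx.
apply: (merit_step_le HXconv Hfdiff HgL Hcdiff HcL) => //.
exact: (Hsys k).2.
Qed.
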